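(* For every prime power $q$ and all $k,m\in\mathbb{N}$, there exists an $m$-multiplication-friendly collection $(C^{(h)};\mathrm{Enc}^{(h)})_{h\in[m]}$ of $[n,k]_q$ classical codes, where $n=q^{m(k-1)}$.
   Context: $x*y$ is the componentwise product in $\mathbb{F}_q^n$. An encoding function of an $[n,k]_q$ classical (linear) code $C\subseteq\mathbb{F}_q^n$ is an $\mathbb{F}_q$-linear isomorphism $\mathrm{Enc}:\mathbb{F}_{q^k}\to C$ (viewing $\mathbb{F}_{q^k}$ as a $k$-dimensional $\mathbb{F}_q$-space). A collection $(C^{(h)};\mathrm{Enc}^{(h)})_{h\in[m]}$ of $[n,k]_q$ codes is $m$-multiplication-friendly if there is an $\mathbb{F}_q$-linear $\mathrm{Dec}:\mathbb{F}_q^n\to\mathbb{F}_{q^k}$ with $z_1\cdots z_m=\mathrm{Dec}(\mathrm{Enc}^{(1)}(z_1)*\cdots*\mathrm{Enc}^{(m)}(z_m))$ for all $z_1,\dots,z_m\in\mathbb{F}_{q^k}$. *)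

From HB Require Import structures.
From mathcomp Require Import all_boot all_order all_algebra all_field.
Set Implicit Arguments. Unset Strict Implicit. Unset Printing Implicit Defensive.
Import GRing.Theory.
Local Open Scope ring_scope.

(* F plays the role of F_q (q = #|F|), L the role of F_{q^k}
   (a field extension of F of dimension k).  Vectors of F_q^n are row
   vectors 'rV[F]_n. *)

(* Componentwise product x_1 * ... * x_m in F^n (empty product = all-ones). *)
Definition cwprod (F : fieldType) (n m : nat) (x : 'I_m -> 'rV[F]_n) : 'rV[F]_n :=
  \row_(j < n) \prod_(h < m) x h 0 j.

Definition code_collection (F : fieldType) (L : fieldExtType F) (n k m : nat)
    (C : 'I_m -> {vspace 'rV[F]_n}) (Enc : 'I_m -> 'Hom(L, 'rV[F]_n)) : Prop :=
  forall h : 'I_m,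
    [/\ \dim (C h) = k, lker (Enc h) = 0%VS & limg (Enc h) = C h].

Definition mult_friendly (F : fieldType) (L : fieldExtType F) (n m : nat)
    (Enc : 'I_m -> 'Hom(L, 'rV[F]_n)) : Prop :=
  exists Dec : 'Hom('rV[F]_n, L),
    forall z : 'I_m -> L,
      \prod_(h < m) z h = Dec (cwprod (fun h => Enc h (z h))).

From HB Require Import structures.
From mathcomp Require Import all_boot all_order all_algebra all_field.
Set Implicit Arguments. Unset Strict Implicit. Unset Printing Implicit Defensive.
Import GRing.Theory.
Local Open Scope ring_scope.

(* Fix a basis e_1, ..., e_k of L over F. The h-th encoding writes z in the
   coordinates indexed by the maps t : [m] -> [k], repeating coordinate t(h)
   of z; the componentwise product of the m codewords is then the family of
   all products of coordinates, which is exactly the data needed to expand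
   z_1 ... z_m over the products e_(t 1) ... e_(t m). This gives codes of
   length k^m, which are zero-padded to length q^(m(k-1)) >= k^m, since
   k <= q^(k-1). *)

Lemma eq_cwprod (F : fieldType) (n m : nat) (x y : 'I_m -> 'rV[F]_n) :
  x =1 y -> cwprod x = cwprod y.
Proof. by move=> xy; apply/rowP=> j; rewrite !mxE; apply: eq_bigr => h _; rewrite xy. Qed.

Lemma code_collection_limg (F : fieldType) (L : fieldExtType F) (n k m : nat)
    (Enc : 'I_m -> 'Hom(L, 'rV[F]_n)) :
  \dim {:L} = k -> (forall h, lker (Enc h) = 0%VS) ->
  code_collection k (fun h => limg (Enc h)) Enc.
Proof.
by move=> dimL Enc_inj h; split=> //; rewrite limg_dim_eq // Enc_inj capv0.
Qed.

Section Padding.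

Variables (F : fieldType) (N n : nat).
Hypothesis leNn : (N <= n)%N.

Definition pad (v : 'rV[F]_N) : 'rV[F]_n :=
  \row_(j < n) if insub (val j) is Some i then v 0 i else 0.

Definition trunc (v : 'rV[F]_n) : 'rV[F]_N := \row_(i < N) v 0 (widen_ord leNn i).

Lemma pad_is_linear : linear pad.
Proof.
move=> a u v; apply/rowP=> j; rewrite !mxE.
by case: insub => [i|]; rewrite ?mxE ?mulr0 ?addr0.
Qed.

HB.instance Definition _ :=
  GRing.isLinear.Build F 'rV[F]_N 'rV[F]_n _ pad pad_is_linear.

Lemma trunc_is_linear : linear trunc.
Proof. by move=> a u v; apply/rowP=> i; rewrite !mxE. Qed.

HB.instance Definition _ :=
  GRing.isLinear.Build F 'rV[F]_n 'rV[F]_N _ trunc trunc_is_linear.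

Lemma padK : cancel pad trunc.
Proof. by move=> v; apply/rowP=> i; rewrite !mxE /= valK. Qed.

Lemma trunc_cwprod m (x : 'I_m -> 'rV[F]_n) :
  trunc (cwprod x) = cwprod (fun h => trunc (x h)).
Proof. by apply/rowP=> i; rewrite !mxE; apply: eq_bigr => h _; rewrite mxE. Qed.

Variables (L : fieldExtType F) (m : nat) (Enc : 'I_m -> 'Hom(L, 'rV[F]_N)).

Definition pad_enc (h : 'I_m) : 'Hom(L, 'rV[F]_n) := (linfun pad \o Enc h)%VF.

Lemma lker_pad_enc h : lker (pad_enc h) = lker (Enc h).
Proof.
apply/vspaceP=> z; rewrite !memv_ker comp_lfunE lfunE /=.
by rewrite -(can_eq padK) linear0.
Qed.

(* For m = 0 the padding coordinates of the product are 1, not 0: decoding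
   must discard them by truncation. *)
Lemma mult_friendly_pad : mult_friendly Enc -> mult_friendly pad_enc.
Proof.
case=> Dec DecP; exists (Dec \o linfun trunc)%VF => z.
rewrite comp_lfunE lfunE /= trunc_cwprod DecP; congr (Dec _).
by apply: eq_cwprod => h; rewrite comp_lfunE lfunE /= padK.
Qed.

End Padding.

Section TensorCode.

Variables (F : fieldType) (L : fieldExtType F) (m : nat).

Let e := vbasis {:L}.
Let I := {ffun 'I_m -> 'I_(\dim {:L})}.
Let N := #|I|.

Definition tensor_enc (h : 'I_m) (z : L) : 'rV[F]_N :=
  \row_(j < N) coord e (enum_val j h) z.

Definition tensor_dec (v : 'rV[F]_N) : L :=
  \sum_(j < N) v 0 j *: \prod_(h < m) e`_(enum_val j h).

Lemma tensor_enc_is_linear h : linear (tensor_enc h).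
Proof. by move=> a x y; apply/rowP=> j; rewrite !mxE linearP. Qed.

HB.instance Definition _ h :=
  GRing.isLinear.Build F L 'rV[F]_N _ (tensor_enc h) (tensor_enc_is_linear h).

Lemma tensor_dec_is_linear : linear tensor_dec.
Proof.
move=> a u v; rewrite /tensor_dec scaler_sumr -big_split /=.
by apply: eq_bigr => j _; rewrite !mxE scalerDl scalerA.
Qed.

HB.instance Definition _ :=
  GRing.isLinear.Build F 'rV[F]_N L _ tensor_dec tensor_dec_is_linear.

Lemma lker_tensor_enc h : lker (linfun (tensor_enc h)) = 0%VS.
Proof.
apply/eqP/lker0P => y z; rewrite !lfunE /= => /rowP yz.
rewrite (coord_vbasis (memvf y)) (coord_vbasis (memvf z)).
apply: eq_bigr => i _; congr (_ *: _).
by have := yz (enum_rank [ffun=> i]); rewrite !mxE enum_rankK ffunE.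
Qed.

Lemma tensor_decK (z : 'I_m -> L) :
  \prod_(h < m) z h = tensor_dec (cwprod (fun h => tensor_enc h (z h))).
Proof.
have expand h : z h = \sum_(i < \dim {:L}) coord e i (z h) *: e`_i.
  exact/coord_vbasis/memvf.
rewrite (eq_bigr _ (fun h _ => expand h)) bigA_distr_bigA /= big_enum_val /=.
apply: eq_bigr => j _; rewrite scaler_prod mxE.
by congr (_ *: _); apply: eq_bigr => h _; rewrite mxE.
Qed.

Lemma mult_friendly_tensor : mult_friendly (fun h => linfun (tensor_enc h)).
Proof.
exists (linfun tensor_dec) => z; rewrite lfunE tensor_decK /=.
by congr (tensor_dec _); apply: eq_cwprod => h; rewrite lfunE.
Qed.

End TensorCode.

Lemma leq_pred_exp q k : (1 < q)%N -> (0 < k)%N -> (k <= q ^ (k - 1))%N.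
Proof. by move=> q_gt1 k_gt0; rewrite -{1}(subnK k_gt0) addn1 ltn_expl. Qed.

Theorem lemma4p5 (F : finFieldType) (L : fieldExtType F) (k m : nat) :
  (0 < k)%N -> \dim {:L} = k ->
  let n := (#|F| ^ (m * (k - 1)))%N in
  exists (C : 'I_m -> {vspace 'rV[F]_n}) (Enc : 'I_m -> 'Hom(L, 'rV[F]_n)),
    @code_collection F L n k m C Enc /\ @mult_friendly F L n m Enc.
Proof.
move=> k_gt0 dimL n.
have tensor_len_le : (#|{ffun 'I_m -> 'I_(\dim {:L})}| <= n)%N.
  rewrite card_ffun !card_ord dimL /n mulnC expnM {n}.
  case: m => [|m'] //; rewrite leq_exp2r //.
  exact/leq_pred_exp/k_gt0/finNzRing_gt1.
pose Enc := pad_enc n (fun h => linfun (@tensor_enc F L m h)).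
exists (fun h => limg (Enc h)), Enc; split.
- apply: code_collection_limg => // h.
  by rewrite (lker_pad_enc tensor_len_le) lker_tensor_enc.
- exact/mult_friendly_pad/mult_friendly_tensor.
Qed.
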